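(* Let $G$ be a graph with Hermitian adjacency matrix $A$ and let $u$ be an arbitrary vertex of $G$. Then $G$ has universal perfect state transfer if and only if perfect state transfer occurs from $u$ to every vertex of $G$ (i.e. for every vertex $v$ there is $t>0$ with $|\langle v|e^{-\mathtt{i} A t}|u\rangle|=1$).
   Context: The continuous-time quantum walk on a graph with Hermitian adjacency matrix $A$ is $U(t)=\exp(-\mathtt{i} A t)$. Perfect state transfer occurs from vertex $v$ to vertex $w$ at time $t>0$ if $|\langle w| e^{-\mathtt{i} A t}|v\rangle|=1$. $G$ has universal perfect state transfer if for every pair of vertices $v,w$ (including $v=w$) perfect state transfer occurs from $v$ to $w$ at some time $t>0$. *)

From HB Require Import structures.
From mathcomp Require Import all_boot all_order all_algebra.
From mathcomp Require Import all_classical all_reals.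
From mathcomp Require Import topology normedtype sequences.
From mathcomp.real_closed Require Import complex.
Set Implicit Arguments. Unset Strict Implicit. Unset Printing Implicit Defensive.
Import Order.TTheory GRing.Theory Num.Theory.
Import numFieldNormedType.Exports.
Local Open Scope ring_scope.
Local Open Scope complex_scope.

Definition hermitian_mx (R : realType) (n : nat) (A : 'M[R[i]]_n) : Prop :=
  forall i j : 'I_n, A j i = (A i j)^*.

Definition expm_partial (R : realType) (n : nat) (A : 'M[R[i]]_n) (t : R) (N : nat)
  : 'M[R[i]]_n :=
  \sum_(k < N) ((- 'i * t%:C) ^+ k / (k`!)%:R) *: A ^+ k.

(* Entry (w,v) of U(t) = exp(-i A t) = sum_k (-i t A)^k / k!, defined as the
   limit of the partial sums, taken componentwise (real and imaginary parts). *)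
Definition walk (R : realType) (n : nat) (A : 'M[R[i]]_n) (t : R) (w v : 'I_n) : R[i] :=
  (limn (fun N => complex.Re (expm_partial A t N w v)))
  +i* (limn (fun N => complex.Im (expm_partial A t N w v))).

Definition pst (R : realType) (n : nat) (A : 'M[R[i]]_n) (v w : 'I_n) : Prop :=
  exists t : R, 0 < t /\ `|walk A t w v| = 1.

Definition universal_pst (R : realType) (n : nat) (A : 'M[R[i]]_n) : Prop :=
  forall v w : 'I_n, pst A v w.

From HB Require Import structures.
From mathcomp Require Import all_boot all_order all_algebra.
From mathcomp Require Import all_classical all_reals.
From mathcomp Require Import topology normedtype sequences exp.
From mathcomp Require Import ring lra zify.
From mathcomp.real_closed Require Import complex.
Import Order.TTheory GRing.Theory Num.Theory.
Import numFieldNormedType.Exports.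
Set Implicit Arguments. Unset Strict Implicit. Unset Printing Implicit Defensive.
Local Open Scope ring_scope.
Local Open Scope complex_scope.
Local Open Scope classical_set_scope.

(* The walk U(t) = exp(-i t A) satisfies U(s + t) = U(s) U(t), U(0) = 1 and,
   since A is Hermitian, U(-t) = U(t)^*; hence U(t) is unitary.  So if
   |U(t)_{zx}| = 1, the column x of U(t) is concentrated on z: perfect state
   transfer x -> z at time t composes with z -> y at time s into x -> y at time
   t + s, and reverses into z -> x at time -t.  Given transfer from u to every
   vertex, go from v back to u (time -t1), wait at u for k returns u -> u of
   period tau with k tau > t1, then go from u to w: the total time is positive. *)

Definition exp_term (K : fieldType) (x : K) (k : nat) : K := x ^+ k / k`!%:R.

Definition exp_partial (K : fieldType) (V : lalgType K) (a : V) (x : K) (N : nat) : V :=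
  \sum_(k < N) exp_term x k *: a ^+ k.

Section ExpTerm.
Variable K : numFieldType.
Implicit Types x y : K.

Lemma exp_termD x y k :
  \sum_(j < k.+1) exp_term x j * exp_term y (k - j) = exp_term (x + y) k.
Proof.
have fact_neq0 m : m`!%:R != 0 :> K by rewrite pnatr_eq0 -lt0n fact_gt0.
rewrite /exp_term addrC exprDn mulr_suml; apply: eq_bigr => j _.
have le_jk : (j <= k)%N by rewrite -ltnS.
rewrite -(bin_fact le_jk) !natrM -mulr_natr.
have binj_neq0 : 'C(k, j)%:R != 0 :> K by rewrite pnatr_eq0 -lt0n bin_gt0.
by field; rewrite !fact_neq0 binj_neq0.
Qed.

Lemma norm_exp_term x k : `|exp_term x k| = exp_term `|x| k.
Proof. by rewrite /exp_term normrM normfV normrX normr_nat. Qed.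

Lemma exp_termMr x y k : exp_term (x * y) k = exp_term x k * y ^+ k.
Proof. by rewrite /exp_term exprMn mulrAC. Qed.

Lemma exp_term_ge0 x k : 0 <= x -> 0 <= exp_term x k.
Proof. by move=> x_ge0; rewrite divr_ge0 ?exprn_ge0. Qed.

End ExpTerm.

Lemma rmorph_exp_term (K L : fieldType) (f : {rmorphism K -> L}) (x : K) k :
  f (exp_term x k) = exp_term (f x) k.
Proof. by rewrite fmorph_div rmorphXn rmorph_nat. Qed.

Lemma big_ord_antidiag (V : nmodType) (G : nat -> nat -> V) N :
  \sum_(k < N) \sum_(j < k.+1) G j (k - j)%N =
  \sum_(j < N) \sum_(l < N | (j + l < N)%N) G j l.
Proof.
elim: N => [|N IH]; first by rewrite !big_ord0.
rewrite big_ord_recr /= IH.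
have split_last (j : 'I_N.+1) : \sum_(l < N.+1 | (j + l < N.+1)%N) G j l =
    \sum_(l < N.+1 | (j + l < N)%N) G j l + \sum_(l < N.+1 | (j + l == N)%N) G j l.
  rewrite (bigID (fun l : 'I_N.+1 => (j + l < N)%N)) /=.
  congr (_ + _); apply: eq_bigl => l; first by apply: andb_idl => /ltnW.
  by rewrite ltnS leq_eqVlt; case: ltngtP.
rewrite (eq_bigr _ (fun j _ => split_last j)) big_split /=.
congr (_ + _).
  rewrite [RHS]big_ord_recr /= [X in _ = _ + X]big1 ?addr0; last first.
    by move=> l; rewrite ltnNge leq_addr.
  apply: eq_bigr => j _.
  by rewrite [RHS]big_mkcond big_ord_recr /= ltnNge leq_addl addr0 -big_mkcond.
apply: eq_bigr => j _.
have lt_Nj : (N - j < N.+1)%N by rewrite ltnS leq_subr.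
rewrite (big_pred1 (Ordinal lt_Nj)) // => l; rewrite /= -val_eqE /=.
by have := ltn_ord j; lia.
Qed.

Lemma exp_partialMB (K : numFieldType) (V : algType K) (a : V) (x y : K) N :
  exp_partial a x N * exp_partial a y N - exp_partial a (x + y) N
  = \sum_(j < N) \sum_(l < N | (N <= j + l)%N) (exp_term x j * exp_term y l) *: a ^+ (j + l).
Proof.
pose G j l := (exp_term x j * exp_term y l) *: a ^+ (j + l).
have -> : exp_partial a x N * exp_partial a y N = \sum_(j < N) \sum_(l < N) G j l.
  rewrite mulr_suml; apply: eq_bigr => j _; rewrite mulr_sumr; apply: eq_bigr => l _.
  by rewrite /G -scalerAl -scalerAr scalerA exprD.
have -> : exp_partial a (x + y) N = \sum_(j < N) \sum_(l < N | (j + l < N)%N) G j l.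
  rewrite -big_ord_antidiag; apply: eq_bigr => k _.
  rewrite -exp_termD scaler_suml; apply: eq_bigr => j _.
  by rewrite /G subnKC // -ltnS.
rewrite -sumrB; apply: eq_bigr => j _.
rewrite (bigID (fun l : 'I_N => (j + l < N)%N)) /= addrC addrK.
by apply: eq_bigl => l; rewrite -leqNgt.
Qed.

Lemma exp_term_sumMB (K : numFieldType) (x y : K) N :
  (\sum_(k < N) exp_term x k) * (\sum_(k < N) exp_term y k) - \sum_(k < N) exp_term (x + y) k
  = \sum_(j < N) \sum_(l < N | (N <= j + l)%N) exp_term x j * exp_term y l.
Proof.
have sum_exp_term z : exp_partial (1 : K^o) z N = \sum_(k < N) exp_term z k.
  by apply: eq_bigr => k _; rewrite expr1n; exact: mulr1.
rewrite -!sum_exp_term exp_partialMB; apply: eq_bigr => j _; apply: eq_bigr => l _.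
by rewrite expr1n; exact: mulr1.
Qed.

Section MatrixBound.
Variables (K : numFieldType) (n : nat).
Implicit Types A : 'M[K]_n.

Definition mx_abs_sum A : K := \sum_i \sum_j `|A i j|.

Lemma mx_abs_sum_ge0 A : 0 <= mx_abs_sum A.
Proof. by rewrite sumr_ge0 // => i _; rewrite sumr_ge0. Qed.

Lemma row_abs_sum_le A i : \sum_j `|A i j| <= mx_abs_sum A.
Proof.
by rewrite /mx_abs_sum [leRHS](bigD1 i) //= lerDl sumr_ge0 // => i' _; rewrite sumr_ge0.
Qed.

Lemma norm_mxX_le A k i j : `|(A ^+ k) i j| <= mx_abs_sum A ^+ k.
Proof.
elim: k i j => [|k IH] i j.
  by rewrite !expr0 mxE; case: (i == j); rewrite ?normr1 ?normr0.
rewrite exprS -mulmxE mxE.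
apply: le_trans (ler_norm_sum _ _ _) _.
apply: le_trans (_ : \sum_l `|A i l| * mx_abs_sum A ^+ k <= _).
  by apply: ler_sum => l _; rewrite normrM ler_wpM2l.
by rewrite -mulr_suml exprS ler_wpM2r ?exprn_ge0 ?mx_abs_sum_ge0 ?row_abs_sum_le.
Qed.

Lemma norm_exp_term_mxX_le A x k i j :
  `|exp_term x k * (A ^+ k) i j| <= exp_term (`|x| * mx_abs_sum A) k.
Proof.
by rewrite normrM norm_exp_term exp_termMr ler_wpM2l ?exp_term_ge0 ?norm_mxX_le.
Qed.

End MatrixBound.

Lemma exp_partial_mxE (K : fieldType) n (A : 'M[K]_n.+1) x N i j :
  exp_partial A x N i j = \sum_(k < N) exp_term x k * (A ^+ k) i j.
Proof. by rewrite summxE; apply: eq_bigr => k _; rewrite mxE. Qed.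

Lemma norm_exp_partialMB_le (K : numFieldType) n (A : 'M[K]_n.+1) x y N i j :
  `|(exp_partial A x N * exp_partial A y N - exp_partial A (x + y) N) i j| <=
  (\sum_(k < N) exp_term (`|x| * mx_abs_sum A) k) *
    (\sum_(k < N) exp_term (`|y| * mx_abs_sum A) k)
  - \sum_(k < N) exp_term (`|x| * mx_abs_sum A + `|y| * mx_abs_sum A) k.
Proof.
rewrite exp_partialMB exp_term_sumMB summxE.
apply: le_trans (ler_norm_sum _ _ _) _; apply: ler_sum => k _.
rewrite summxE; apply: le_trans (ler_norm_sum _ _ _) _; apply: ler_sum => l _.
rewrite mxE !exp_termMr [leRHS]mulrACA -exprD normrM.
apply: ler_pM => //; last exact: norm_mxX_le.
by rewrite normrM !norm_exp_term.
Qed.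

Section ComplexSequences.
Variable R : realType.
Local Notation C := R[i].
Local Notation Re := (@complex.Re R).
Local Notation Im := (@complex.Im R).
Implicit Types (a b z : C) (u v : nat -> C).

Lemma ReD a b : Re (a + b) = Re a + Re b. Proof. by case: a; case: b. Qed.
Lemma ImD a b : Im (a + b) = Im a + Im b. Proof. by case: a; case: b. Qed.
Lemma ReB a b : Re (a - b) = Re a - Re b. Proof. by case: a; case: b. Qed.
Lemma ImB a b : Im (a - b) = Im a - Im b. Proof. by case: a; case: b. Qed.
Lemma ReM a b : Re (a * b) = Re a * Re b - Im a * Im b. Proof. by case: a; case: b. Qed.
Lemma ImM a b : Im (a * b) = Re a * Im b + Im a * Re b.
Proof. by case: a => ? ?; case: b => ? ? /=; rewrite addrC. Qed.
Lemma ReJ a : Re a^* = Re a. Proof. by case: a. Qed.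
Lemma ImJ a : Im a^* = - Im a. Proof. by case: a. Qed.

Lemma Re_sum (I : Type) (s : seq I) (P : pred I) (F : I -> C) :
  Re (\sum_(i <- s | P i) F i) = \sum_(i <- s | P i) Re (F i).
Proof. exact: (big_morph _ ReD). Qed.

Lemma Im_sum (I : Type) (s : seq I) (P : pred I) (F : I -> C) :
  Im (\sum_(i <- s | P i) F i) = \sum_(i <- s | P i) Im (F i).
Proof. exact: (big_morph _ ImD). Qed.

Lemma Re_Im_le_norm z r : `|z| <= r%:C -> `|Re z| <= r /\ `|Im z| <= r.
Proof.
rewrite normc_def lecR => z_le; split; apply: le_trans z_le; rewrite -sqrtr_sqr;
  by apply: ler_wsqrtr; rewrite ?lerDl ?lerDr sqr_ge0.
Qed.

Definition cvgC u l :=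
  (fun N => Re (u N)) @ \oo --> Re l /\ (fun N => Im (u N)) @ \oo --> Im l.

Lemma cvgC_limn u :
  cvgn (fun N => Re (u N)) -> cvgn (fun N => Im (u N)) ->
  cvgC u (limn (fun N => Re (u N)) +i* limn (fun N => Im (u N))).
Proof. by []. Qed.

Lemma cvgC_unique u l l' : cvgC u l -> cvgC u l' -> l = l'.
Proof.
case: l l' => a b [c d] [Ra Ib] [Rc Id] /=.
by congr Complex; [exact: cvg_unique Ra Rc | exact: cvg_unique Ib Id].
Qed.

Lemma cvgC_cst l : cvgC (fun=> l) l.
Proof. by split; exact: cvg_cst. Qed.

Lemma cvgC_shiftS u l : cvgC (fun N => u N.+1) l -> cvgC u l.
Proof. by case=> ? ?; split; rewrite -cvg_shiftS. Qed.

Lemma cvgC_add u v l l' : cvgC u l -> cvgC v l' -> cvgC (fun N => u N + v N) (l + l').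
Proof.
case=> ? ? [? ?]; split; rewrite /= ?ReD ?ImD;
  [under eq_fun do rewrite ReD | under eq_fun do rewrite ImD]; exact: cvgD.
Qed.

Lemma cvgC_sub u v l l' : cvgC u l -> cvgC v l' -> cvgC (fun N => u N - v N) (l - l').
Proof.
case=> ? ? [? ?]; split; rewrite /= ?ReB ?ImB;
  [under eq_fun do rewrite ReB | under eq_fun do rewrite ImB]; exact: cvgB.
Qed.

Lemma cvgC_mul u v l l' : cvgC u l -> cvgC v l' -> cvgC (fun N => u N * v N) (l * l').
Proof.
case=> ? ? [? ?]; split; rewrite /= ?ReM ?ImM.
  by under eq_fun do rewrite ReM; apply: cvgB; exact: cvgM.
by under eq_fun do rewrite ImM; apply: cvgD; exact: cvgM.
Qed.

Lemma cvgC_conj u l : cvgC u l -> cvgC (fun N => (u N)^*) l^*.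
Proof.
case=> ? ?; split; rewrite /= ?ReJ ?ImJ.
  by under eq_fun do rewrite ReJ.
by under eq_fun do rewrite ImJ; exact: cvgN.
Qed.

Lemma cvgC_sum (I : Type) (s : seq I) (F : I -> nat -> C) (l : I -> C) :
  (forall i, cvgC (F i) (l i)) ->
  cvgC (fun N => \sum_(i <- s) F i N) (\sum_(i <- s) l i).
Proof.
move=> F_cvg; elim: s => [|i s IH].
  by under eq_fun do rewrite big_nil; rewrite big_nil; exact: cvgC_cst.
by under eq_fun do rewrite big_cons; rewrite big_cons; exact: cvgC_add.
Qed.

Lemma cvgC_le u l (d : R^nat) :
  d @ \oo --> 0 -> (forall N, `|u N - l| <= (d N)%:C) -> cvgC u l.
Proof.
move=> d_cvg0 ul_le.
have squeeze (f : R^nat) r : (forall N, `|f N - r| <= d N) -> f @ \oo --> r.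
  move=> fr_le; apply: (@squeeze_cvgr _ _ _ _ (fun N => r - d N) (fun N => r + d N)).
  - by near=> N; have := fr_le N; rewrite ler_norml => /andP[? ?]; apply/andP; lra.
  - by rewrite -[X in _ --> X]subr0; apply: cvgB => //; exact: cvg_cst.
  - by rewrite -[X in _ --> X]addr0; apply: cvgD => //; exact: cvg_cst.
by split; apply: squeeze => N; have [] := Re_Im_le_norm (ul_le N); rewrite ?ReB ?ImB.
Unshelve. all: by end_near.
Qed.

Lemma cvgn_series_dominated u (b : R^nat) :
  (forall k, `|u k| <= (b k)%:C) -> cvgn (series b) ->
  cvgn (fun N => Re (\sum_(k < N) u k)) /\ cvgn (fun N => Im (\sum_(k < N) u k)).
Proof.
move=> u_le b_cvg.
have b_ge0 k : 0 <= b k by rewrite -ler0c (le_trans _ (u_le k)).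
have dominated (w : R^nat) : (forall k, `|w k| <= b k) -> cvgn (series w).
  by move=> w_le; apply: (@normed_cvg _ R^o); exact: series_le_cvg w_le b_cvg.
have Re_Im_le k := Re_Im_le_norm (u_le k).
split.
  have -> : (fun N => Re (\sum_(k < N) u k)) = series (fun k => Re (u k)).
    by apply/funext => N; rewrite Re_sum /series /= big_mkord.
  by apply: dominated => k; have [] := Re_Im_le k.
have -> : (fun N => Im (\sum_(k < N) u k)) = series (fun k => Im (u k)).
  by apply/funext => N; rewrite Im_sum /series /= big_mkord.
by apply: dominated => k; have [] := Re_Im_le k.
Qed.

End ComplexSequences.

Lemma sum_exp_term_real (R : realType) (r : R) N :
  \sum_(k < N) exp_term r%:C k = (series (exp_coeff r) N)%:C.
Proof.
rewrite /series /= big_mkord rmorph_sum; apply: eq_bigr => k _.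
by rewrite rmorph_exp_term.
Qed.

Lemma exp_term_sumMB_real (R : realType) (r s : R) N :
  (\sum_(k < N) exp_term r%:C k) * (\sum_(k < N) exp_term s%:C k)
    - \sum_(k < N) exp_term (r%:C + s%:C) k
  = (series (exp_coeff r) N * series (exp_coeff s) N - series (exp_coeff (r + s)) N)%:C.
Proof.
rewrite rmorphB rmorphM; congr (_ * _ - _); rewrite ?sum_exp_term_real //.
by rewrite -rmorphD sum_exp_term_real.
Qed.

Definition pst_at (R : realType) n (A : 'M[R[i]]_n) (t : R) (v w : 'I_n) : Prop :=
  `|walk A t w v| = 1.

Section Walk.
Variables (R : realType) (n : nat) (A : 'M[R[i]]_n.+1).

Lemma expm_partialE t N : expm_partial A t N = exp_partial A (- 'i * t%:C) N.
Proof. by []. Qed.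

(* The exponential series of [growth x] dominates every entry of the series of
   [exp (x A)]. *)
Definition growth (x : R[i]) : R := complex.Re (`|x| * mx_abs_sum A).

Lemma growthE x : `|x| * mx_abs_sum A = (growth x)%:C.
Proof. by rewrite RRe_real // ger0_real // mulr_ge0 ?mx_abs_sum_ge0. Qed.

Lemma walk_cvg t i j : cvgC (fun N => expm_partial A t N i j) (walk A t i j).
Proof.
set x := - 'i * t%:C.
have [k | | Re_cvg Im_cvg] :=
  cvgn_series_dominated (u := fun k => exp_term x k * (A ^+ k) i j) (b := exp_coeff (growth x)).
- by rewrite (le_trans (norm_exp_term_mxX_le _ _ _ _ _)) // growthE -rmorph_exp_term.
- exact: is_cvg_series_exp_coeff.
apply: cvgC_limn.
  by under eq_fun do rewrite expm_partialE exp_partial_mxE.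
by under eq_fun do rewrite expm_partialE exp_partial_mxE.
Qed.

Lemma walk_add s t i j : walk A (s + t) i j = \sum_m walk A s i m * walk A t m j.
Proof.
set xs := - 'i * s%:C; set xt := - 'i * t%:C.
set P := fun N => exp_partial A xs N * exp_partial A xt N.
set D := fun N => P N - exp_partial A (xs + xt) N.
apply: cvgC_unique (walk_cvg (s + t) i j) _.
(* [P N] tends to the product of the limits; the defect [D N] is dominated by
   the same defect for real exponential series, which tends to 0 by [expRD]. *)
have -> : (fun N => expm_partial A (s + t) N i j) = fun N => P N i j - D N i j.
  apply/funext => N; rewrite expm_partialE rmorphD mulrDr -/xs -/xt.
  by rewrite /D !mxE subKr.
rewrite -[X in cvgC _ X]subr0; apply: cvgC_sub.
  under eq_fun do rewrite /P -mulmxE mxE.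
  by apply: cvgC_sum => m; apply: cvgC_mul; exact: walk_cvg.
pose d N := series (exp_coeff (growth xs)) N * series (exp_coeff (growth xt)) N
            - series (exp_coeff (growth xs + growth xt)) N.
apply: (@cvgC_le _ _ _ d).
  rewrite -(subrr (expR (growth xs) * expR (growth xt))) -[X in _ - X]expRD.
  by apply: cvgB; [apply: cvgM|]; exact: is_cvg_series_exp_coeff.
move=> N; rewrite subr0 /d -exp_term_sumMB_real -!growthE.
exact: norm_exp_partialMB_le.
Qed.

Lemma walk0 i j : walk A 0 i j = (i == j)%:R.
Proof.
apply: cvgC_unique (walk_cvg 0 i j) _; apply: cvgC_shiftS.
have -> : (fun N => expm_partial A 0 N.+1 i j) = fun=> (i == j)%:R.
  apply/funext => N; rewrite expm_partialE mulr0 /exp_partial big_ord_recl big1 ?addr0.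
    by rewrite /exp_term !expr0 divr1 scale1r mxE.
  by move=> k _; rewrite /exp_term expr0n /= mul0r scale0r.
exact: cvgC_cst.
Qed.

End Walk.

Section Hermitian.
Variables (R : realType) (n : nat) (A : 'M[R[i]]_n.+1).
Hypothesis A_herm : hermitian_mx A.

Lemma hermitian_mxX k i j : ((A ^+ k) i j)^* = (A ^+ k) j i.
Proof.
elim: k i j => [|k IH] i j; first by rewrite !expr0 !mxE conjc_nat eq_sym.
rewrite [in LHS]exprS [in RHS]exprSr -!mulmxE !mxE rmorph_sum.
by apply: eq_bigr => m _; rewrite rmorphM /= IH -A_herm mulrC.
Qed.

Lemma exp_partial_conj x N i j : (exp_partial A x N i j)^* = exp_partial A x^* N j i.
Proof.
rewrite !exp_partial_mxE rmorph_sum; apply: eq_bigr => k _.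
by rewrite rmorphM /= hermitian_mxX rmorph_exp_term.
Qed.

Lemma walk_conj t i j : walk A (- t) j i = (walk A t i j)^*.
Proof.
apply: cvgC_unique (walk_cvg A (- t) j i) _.
have -> : (fun N => expm_partial A (- t) N j i) = fun N => (expm_partial A t N i j)^*.
  have conj_rate : (- 'i * t%:C)^* = - 'i * (- t)%:C.
    by apply/eqP; rewrite eq_complex /=; apply/andP; split; apply/eqP; ring.
  by apply/funext => N; rewrite !expm_partialE exp_partial_conj -conj_rate.
exact: cvgC_conj (walk_cvg A t i j).
Qed.

Lemma walk_col_norm t j : \sum_i `|walk A t i j| ^+ 2 = 1.
Proof.
have := walk_add A (- t) t j j; rewrite addNr walk0 eqxx mulr1n => ->.
by apply: eq_bigr => i _; rewrite walk_conj sqr_normc mulrC.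
Qed.

Lemma walk_col_eq0 t i j m : `|walk A t i j| = 1 -> m != i -> walk A t m j = 0.
Proof.
move=> ij_unit m_neq_i.
have := walk_col_norm t j.
rewrite (bigD1 i) //= ij_unit expr1n -[RHS]addr0 => /addrI rest_eq0.
have := psumr_eq0P (fun l _ => exprn_ge0 2 (normr_ge0 (walk A t l j))) rest_eq0 m_neq_i.
by move/eqP; rewrite sqrf_eq0 normr_eq0 => /eqP.
Qed.

Lemma pst_at_trans t s x y z : pst_at A t x y -> pst_at A s y z -> pst_at A (t + s) x z.
Proof.
move=> xy yz; rewrite /pst_at addrC walk_add (bigD1 y) //= big1 ?addr0.
  by rewrite normrM xy yz mulr1.
by move=> m m_neq_y; rewrite (walk_col_eq0 xy m_neq_y) mulr0.
Qed.

Lemma pst_at_sym t x y : pst_at A t x y -> pst_at A (- t) y x.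
Proof.
by rewrite /pst_at walk_conj; case: (walk A t y x) => a b; rewrite !normc_def /= sqrrN.
Qed.

Lemma pst_at_mulrn t x k : pst_at A t x x -> pst_at A (t *+ k) x x.
Proof.
move=> xx; elim: k => [|k IH]; first by rewrite /pst_at mulr0n walk0 eqxx normr1.
by rewrite mulrSr; exact: pst_at_trans IH xx.
Qed.

End Hermitian.

Theorem lemma2 (R : realType) (n : nat) (A : 'M[R[i]]_n) (u : 'I_n) :
  hermitian_mx A ->
  (universal_pst A <-> forall v : 'I_n, pst A u v).
Proof.
case: n A u => [|n] A u A_herm; first by case: u.
split=> [upst v | u_pst v w]; first exact: upst.
have [t1 [_ uv]] := u_pst v.
have [t2 [t2_gt0 uw]] := u_pst w.
have [tau [tau_gt0 uu]] := u_pst u.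
set k := (Num.truncn (t1 / tau)).+1.
have t1_lt : t1 < tau *+ k by rewrite /k -mulr_natl -ltr_pdivrMr // truncnS_gt.
exists (- t1 + tau *+ k + t2); split; first lra.
apply: (pst_at_trans A_herm _ uw).
apply: (pst_at_trans A_herm (pst_at_sym A_herm uv)).
exact: (pst_at_mulrn A_herm k uu).
Qed.
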